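(* Let $A=\{a_1,\dots,a_k\}$ be a finite set of options and let $u_1,u_2:A\to\mathbb{R}$ be arbitrary. In the two-player Price \& Choose game defined in the context, (i) every subgame-perfect Nash equilibrium $\sigma=(\sigma_1,\sigma_2)$ has an efficient outcome, i.e. $\sigma_2(\sigma_1)\in\arg\max_{a\in A}\,(u_1(a)+u_2(a))$; and (ii) for every efficient option $a\in A$ there exists a subgame-perfect Nash equilibrium $\sigma$ with $\sigma_2(\sigma_1)=a$. (In particular, a subgame-perfect Nash equilibrium exists.)
   Context: Two players with quasi-linear utilities: if option $a\in A$ is selected and player $i$ receives monetary transfer $t_i$, player $i$'s utility is $u_i(a)+t_i$. Let $P=\{p\in\mathbb{R}^k:\sum_{j=1}^k p_j=0\}$. The Price \& Choose (P\&C) game: first player 1 chooses a price vector $p\in P$; then player 2, having observed $p$, chooses an option $a_j\in A$ and pays $p_j$ to player 1. Payoffs are $g_1(p,a_j)=u_1(a_j)+p_j$ and $g_2(p,a_j)=u_2(a_j)-p_j$. A (pure) strategy profile is $\sigma=(\sigma_1,\sigma_2)$ with $\sigma_1\in P$ and $\sigma_2:P\to A$. It is a subgame-perfect Nash equilibrium if for every $p\in P$, $\sigma_2(p)\in\arg\max_{a\in A}g_2(p,a)$, and $g_1(\sigma_1,\sigma_2(\sigma_1))\ge g_1(p,\sigma_2(p))$ for all $p\in P$. Its outcome is $\sigma_2(\sigma_1)$. An option $a$ is efficient if $u_1(a)+u_2(a)=\max_{b\in A}(u_1(b)+u_2(b))$. *)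

From mathcomp Require Import all_boot all_order all_algebra.
From mathcomp Require Import reals.
Set Implicit Arguments. Unset Strict Implicit. Unset Printing Implicit Defensive.
Import Order.TTheory GRing.Theory Num.Theory.
Local Open Scope ring_scope.

Section PC.
Variables (R : realType) (k : nat).

Definition price_space : Type := {p : 'I_k -> R | \sum_(j < k) p j = 0}.

Definition price (p : price_space) : 'I_k -> R := proj1_sig p.

Variables (u1 u2 : 'I_k -> R).

Definition g1 (p : price_space) (j : 'I_k) : R := u1 j + price p j.
Definition g2 (p : price_space) (j : 'I_k) : R := u2 j - price p j.

Definition is_SPNE (s1 : price_space) (s2 : price_space -> 'I_k) : Prop :=
  (forall p : price_space, forall b : 'I_k, g2 p b <= g2 p (s2 p)) /\
  (forall p : price_space, g1 p (s2 p) <= g1 s1 (s2 s1)).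

Definition outcome (s1 : price_space) (s2 : price_space -> 'I_k) : 'I_k := s2 s1.

Definition efficient (a : 'I_k) : Prop :=
  forall b : 'I_k, u1 b + u2 b <= u1 a + u2 a.

End PC.

From mathcomp Require Import all_boot all_order all_algebra.
From mathcomp Require Import reals.
From mathcomp Require Import lra.
Import Order.TTheory GRing.Theory Num.Theory.
Local Open Scope ring_scope.

(* Since prices sum to zero, player 2's payoffs average to the mean [c] of
   [u2] whatever the price vector, so a best response gives player 2 at least
   [c], and player 1 (who receives the total surplus minus player 2's share)
   at most [u1 a + u2 a - c] when option [a] is chosen.  Player 1 can ask for
   player 2's payoffs to be any profile [t] shifted by a constant, which
   exactly attains that bound: with [t = 0] at an efficient option, and with
   [t] a small bonus on a more efficient option as a profitable deviation
   from an inefficient outcome. *)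

Section ArgMaxAt.
Variables (I : finType) (R : realDomainType) (a : I) (f : I -> R).

Definition argmax_at : I :=
  let m := [arg max_(j > a) f j]%O in if f m <= f a then a else m.

Lemma le_argmax_at b : f b <= f argmax_at.
Proof.
rewrite /argmax_at; case: arg_maxP => // m _ fm_max.
by case: ifP => [fma|_]; [apply: le_trans fma|]; apply: fm_max.
Qed.

Lemma argmax_atE : (forall b, f b <= f a) -> argmax_at = a.
Proof. by move=> fa_max; rewrite /argmax_at fa_max. Qed.

End ArgMaxAt.

Arguments argmax_at {I R}.

Section PriceAndChoose.
Variables (R : realType) (k : nat) (u1 u2 : 'I_k -> R).
Hypothesis k_gt0 : (0 < k)%N.

Definition mean (q : 'I_k -> R) : R := (\sum_(j < k) q j) / k%:R.

Lemma sum_sub_mean (q : 'I_k -> R) : \sum_(j < k) (q j - mean q) = 0.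
Proof.
rewrite sumrB sumr_const card_ord -mulr_natr divfK ?subrr //.
by rewrite pnatr_eq0 -lt0n.
Qed.

Definition centered_price (q : 'I_k -> R) : price_space R k :=
  exist _ _ (sum_sub_mean q).

Definition transfer_price (t : 'I_k -> R) : price_space R k :=
  centered_price (fun j => u2 j - t j).

Lemma g2_transfer_price t j :
  g2 u2 (transfer_price t) j = t j + (mean u2 - mean t).
Proof. by rewrite /g2 /= /mean sumrB mulrBl; lra. Qed.

Lemma g1_add_g2 p j : g1 u1 p j + g2 u2 p j = u1 j + u2 j.
Proof. by rewrite /g1 /g2; lra. Qed.

Lemma sum_g2 p : \sum_(j < k) g2 u2 p j = \sum_(j < k) u2 j.
Proof. by rewrite /g2 sumrB /price (proj2_sig p) subr0. Qed.

Lemma mean_u2_le_best_response {p j} :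
  (forall b, g2 u2 p b <= g2 u2 p j) -> mean u2 <= g2 u2 p j.
Proof.
move=> j_best; rewrite /mean ler_pdivrMr ?ltr0n // -(sum_g2 p) mulr_natr.
rewrite -[k in _ *+ k]card_ord -sumr_const.
by apply: ler_sum => b _; apply: j_best.
Qed.

Lemma g1_best_response_le {p j} :
  (forall b, g2 u2 p b <= g2 u2 p j) -> g1 u1 p j <= u1 j + u2 j - mean u2.
Proof.
move=> /mean_u2_le_best_response; have := g1_add_g2 p j; lra.
Qed.

Lemma spne_outcome_efficient s1 s2 :
  is_SPNE u1 u2 s1 s2 -> efficient u1 u2 (outcome s1 s2).
Proof.
move=> [s2_best s1_best] b; rewrite /outcome; set a := s2 s1.
rewrite leNgt; apply/negP => a_lt_b.
set e := (u1 b + u2 b - (u1 a + u2 a)) / 2.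
have e_gt0 : 0 < e by rewrite divr_gt0 // subr_gt0.
pose t j := if j == b then e else 0.
have mean_t_ge0 : 0 <= mean t.
  by rewrite divr_ge0 // sumr_ge0 // => j _; rewrite /t; case: eqP => // _; lra.
pose p := transfer_price t.
have s2p_b : s2 p = b.
  apply/eqP; apply: contraT => /negbTE s2p_ne_b.
  by have := s2_best p b; rewrite !g2_transfer_price /t eqxx s2p_ne_b; lra.
have := s1_best p; rewrite s2p_b.
have := g1_best_response_le (s2_best s1).
have := g1_add_g2 p b; rewrite g2_transfer_price /t eqxx /e; lra.
Qed.

Lemma efficient_spne_outcome a :
  efficient u1 u2 a ->
  exists s1 s2, is_SPNE u1 u2 s1 s2 /\ outcome s1 s2 = a.
Proof.
move=> a_eff; pose s1 := transfer_price (fun=> 0).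
pose s2 p := argmax_at a (g2 u2 p).
have s2_best p b : g2 u2 p b <= g2 u2 p (s2 p) by apply: le_argmax_at.
have g2_s1 j : g2 u2 s1 j = mean u2.
  by rewrite g2_transfer_price /(mean (fun=> 0)) big1 ?mul0r // add0r subr0.
have s2_s1 : s2 s1 = a by apply: argmax_atE => b; rewrite !g2_s1.
exists s1, s2; split=> //; split=> // p; rewrite s2_s1.
have := g1_best_response_le (s2_best p); have := a_eff (s2 p).
have := g1_add_g2 s1 a; rewrite g2_s1; lra.
Qed.

End PriceAndChoose.

Theorem proposition1 (R : realType) (k : nat) (u1 u2 : 'I_k -> R) :
  (forall (s1 : price_space R k) (s2 : price_space R k -> 'I_k),
      is_SPNE u1 u2 s1 s2 -> efficient u1 u2 (outcome s1 s2)) /\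
  (forall a : 'I_k, efficient u1 u2 a ->
      exists (s1 : price_space R k) (s2 : price_space R k -> 'I_k),
        is_SPNE u1 u2 s1 s2 /\ outcome s1 s2 = a).
Proof.
split=> [s1 s2 | a].
- have k_gt0 : (0 < k)%N by case: (s2 s1) => i /(leq_ltn_trans (leq0n i)).
  exact: spne_outcome_efficient.
- exact: efficient_spne_outcome (leq_ltn_trans (leq0n a) (ltn_ord a)) a.
Qed.
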